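(* Let $R$ be a commutative Noetherian local ring with total quotient ring $Q$ (the localization at the set $S$ of nonzerodivisors), and let $M$ be a finitely generated $R$-module of constant rank $n$ such that $E=\operatorname{End}_R(M)$ is an $R^*$-algebra. Identifying $E_S\cong \operatorname{End}_Q(M_S)\cong M_n(Q)$ (via a $Q$-basis of the free $Q$-module $M_S$), the induced $Q^*$-algebra structure on $E_S$ has the form $A^*=C^{-1}A^TC$ for some invertible $C\in M_n(Q)$ and $a\in Q$ with $C^T=aC$, $a^2=1$; write $a=r/s$ with $r,s$ nonzerodivisors of $R$. Then the $R$-submodule $T=\langle s\,x\otimes y - r\,y\otimes x \mid x,y\in M\rangle$ of $M_*\otimes_E M$ is a torsion $R$-module (i.e. $T\otimes_R Q=0$).
   Context: An $R$-algebra $E$ (possibly noncommutative) is an $R^*$-algebra if there is a map of abelian groups $(-)^*:E\to E$ with $(ab)^*=b^*a^*$, $1_E^*=1_E$, $(ra)^*=ra^*$ for $r\in R$, and $a^{**}=a$ for all $a,b\in E$. $M$ is a left $E$-module via $f\cdot x=f(x)$, and $M_*$ denotes $M$ regarded as a right $E$-module via $x\cdot f=f^*(x)$. $M$ has constant rank $n$ if $M\otimes_R Q$ is a free $Q$-module of rank $n$. The $Q^*$-structure on $E_S$ is $(f/u)^*=f^*/u$. *)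

From HB Require Import structures.
From mathcomp Require Import all_boot all_order all_algebra.
Set Implicit Arguments. Unset Strict Implicit. Unset Printing Implicit Defensive.
Import Order.TTheory GRing.Theory Num.Theory.
Local Open Scope ring_scope.

Section Defs.
Variable R : comPzRingType.

Definition nzd (u : R) : Prop := forall x : R, u * x = 0 -> x = 0.

Definition is_ideal (I : R -> Prop) : Prop :=
  [/\ I 0, (forall x y, I x -> I y -> I (x + y)) & (forall c x, I x -> I (c * x))].

Definition maximal_ideal (I : R -> Prop) : Prop :=
  [/\ is_ideal I, ~ I 1 &
     forall J, is_ideal J -> (forall x, I x -> J x) -> ~ J 1 -> forall x, J x -> I x].

Definition local_ring : Prop :=
  exists m, maximal_ideal m /\
    forall m', maximal_ideal m' -> forall x, m' x <-> m x.

Definition noetherian : Prop :=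
  forall I, is_ideal I -> exists gs : seq R,
    forall x, I x <-> exists cs : seq R,
      size cs = size gs /\ x = \sum_(i < size gs) cs`_i * gs`_i.

Variable M : lmodType R.

Definition fin_gen : Prop :=
  exists gs : seq M, forall x : M, exists cs : seq R,
    size cs = size gs /\ x = \sum_(i < size gs) cs`_i *: gs`_i.

(* elements of E = End_R(M) *)
Definition Rlin (f : M -> M) : Prop :=
  forall (c : R) (x y : M), f (c *: x + y) = c *: f x + f y.

Definition Rstar_algebra (star : (M -> M) -> (M -> M)) : Prop :=
  (forall f, Rlin f -> Rlin (star f)) /\
  [/\ forall f g, Rlin f -> Rlin g -> star (f \+ g) = star f \+ star g,
      forall f g, Rlin f -> Rlin g -> star (f \o g) = star g \o star f,
      star id = id,
      forall (c : R) f, Rlin f -> star (fun x => c *: f x) = (fun x => c *: star f x)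
    & forall f, Rlin f -> star (star f) = f].

(* E-balanced biadditive maps M_* x M -> A, where x . f := star f x *)
Definition balanced (star : (M -> M) -> (M -> M)) (A : zmodType)
    (beta : M -> M -> A) : Prop :=
  [/\ forall x x' y, beta (x + x') y = beta x y + beta x' y,
      forall x y y', beta x (y + y') = beta x y + beta x y'
    & forall f, Rlin f -> forall x y, beta (star f x) y = beta x (f y)].

(* A formal R-combination  sum c (x (x) y)  (i.e. sum (c x) (x) y) in M_* (x)_E M
   is zero iff it is killed by every E-balanced biadditive map
   (universal property of the tensor product). *)
Definition tensor_zero (star : (M -> M) -> (M -> M)) (t : seq (R * M * M)) : Prop :=
  forall (A : zmodType) (beta : M -> M -> A), balanced star beta ->
    \sum_(p <- t) beta (p.1.1 *: p.1.2) p.2 = 0.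

(* the element  sum_k c_k (s x_k (x) y_k - r y_k (x) x_k)  of T *)
Definition T_elem (s r : R) (l : seq (R * M * M)) : seq (R * M * M) :=
  flatten [seq [:: (p.1.1 * s, p.1.2, p.2); (- (p.1.1 * r), p.2, p.1.2)] | p <- l].

Definition rscale (u : R) (t : seq (R * M * M)) : seq (R * M * M) :=
  [seq (u * p.1.1, p.1.2, p.2) | p <- t].

End Defs.

Definition total_quotient (R : comPzRingType) (Q : comUnitRingType)
    (iota : {rmorphism R -> Q}) : Prop :=
  [/\ forall u, nzd u -> iota u \is a GRing.unit,
      forall q : Q, exists a u, nzd u /\ q = iota a / iota u
    & forall a, iota a = 0 -> a = 0].

Definition module_localization (R : comPzRingType) (M : lmodType R)
    (Q : comUnitRingType) (iota : {rmorphism R -> Q}) (N : lmodType Q)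
    (jM : M -> N) : Prop :=
  [/\ forall x y, jM (x + y) = jM x + jM y,
      forall c x, jM (c *: x) = iota c *: jM x,
      forall v : N, exists x u, nzd u /\ v = (iota u)^-1 *: jM x
    & forall x, jM x = 0 -> exists u, nzd u /\ u *: x = 0].

Definition is_basis (Q : comUnitRingType) (N : lmodType Q) (n : nat)
    (b : 'I_n -> N) : Prop :=
  forall v : N, exists! c : 'cV[Q]_n, v = \sum_i c i ord0 *: b i.

Definition represents (R : comPzRingType) (M : lmodType R)
    (Q : comUnitRingType) (N : lmodType Q) (jM : M -> N) (n : nat)
    (b : 'I_n -> N) (f : M -> M) (A : 'M[Q]_n) : Prop :=
  forall (x : M) (c : 'cV[Q]_n), jM x = \sum_i c i ord0 *: b i ->
    jM (f x) = \sum_i (A *m c) i ord0 *: b i.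

From HB Require Import structures.
From mathcomp Require Import all_boot all_order all_algebra.
From mathcomp Require Import ring.
From Stdlib Require Import ClassicalEpsilon.
Import Order.TTheory GRing.Theory Num.Theory.
Local Open Scope ring_scope.
Set Implicit Arguments. Unset Strict Implicit.

(* For an R-linear form lam : M -> R and p in M let th_p := lam(-) p.  Over Q the
   endomorphism th_p has the rank-one matrix p' l (p' the coordinates of p, l a row),
   so star th_y o th_x has matrix C^-1 l^T (y'^T C x') l.  As the 1x1 matrix
   y'^T C x' equals a x'^T C y', the endomorphisms s (star th_y o th_x) and
   r (star th_x o th_y) agree after localization, hence differ by torsion.  Evaluating
   at some x0 with lam x0 = k a nonzerodivisor and moving the endomorphisms across
   the tensor sign gives v k^2 (s x (x) y - r y (x) x) = 0 for a nonzerodivisor v.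
   Such lam and x0 exist by clearing the denominators of a coordinate function, M
   being finitely generated; when n = 0 the module M is torsion. *)

Section NonZeroDivisors.
Variable R : comPzRingType.

Lemma nzd1 : nzd (1 : R).
Proof. by move=> x; rewrite mul1r. Qed.

Lemma nzdM (u v : R) : nzd u -> nzd v -> nzd (u * v).
Proof. by move=> hu hv x; rewrite -mulrA => /hu /hv. Qed.

End NonZeroDivisors.

Section LinearMaps.
Variables (R : comPzRingType) (M : lmodType R) (f : M -> M).
Hypothesis hf : Rlin f.

Lemma Rlin0 : f 0 = 0.
Proof.
have := hf 1 0 0; rewrite !scale1r addr0 => /(congr1 (fun t => t - f 0)).
by rewrite subrr addrK.
Qed.

Lemma RlinZ c x : f (c *: x) = c *: f x.
Proof. by have := hf c x 0; rewrite addr0 Rlin0 addr0. Qed.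

End LinearMaps.

Section Balanced.
Variables (R : comPzRingType) (M : lmodType R) (star : (M -> M) -> (M -> M)).
Hypothesis hstar : Rstar_algebra star.
Variables (A : zmodType) (beta : M -> M -> A).
Hypothesis hbeta : balanced star beta.

Lemma balanced0l y : beta 0 y = 0.
Proof.
have [hD _ _] := hbeta; have := hD 0 0 y.
by rewrite addr0 => /(congr1 (fun t => t - beta 0 y)); rewrite subrr addrK.
Qed.

Lemma balancedNl x y : beta (- x) y = - beta x y.
Proof.
have [hD _ _] := hbeta; apply/eqP; rewrite -addr_eq0 addrC -hD.
by rewrite subrr balanced0l.
Qed.

Lemma balancedZ c x y : beta x (c *: y) = beta (c *: x) y.
Proof.
have [_ [_ _ star_id starZ _]] := hstar; have [_ _ hE] := hbeta.
have cZ : Rlin (fun z : M => c *: id z).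
  by move=> c' z z'; rewrite /= scalerDr !scalerA mulrC.
by rewrite -(hE _ cZ) (starZ c id) // star_id.
Qed.

Lemma balancedZl k : balanced star (fun x y => beta (k *: x) y).
Proof.
have [hD hD' hE] := hbeta; have [star_lin _] := hstar; split.
- by move=> x x' y; rewrite scalerDr hD.
- by move=> x y y'; rewrite hD'.
- by move=> f hf x y; rewrite -(RlinZ (star_lin f hf)) hE.
Qed.

End Balanced.

Section TensorRelations.
Variables (R : comPzRingType) (M : lmodType R) (star : (M -> M) -> (M -> M)).
Hypothesis hstar : Rstar_algebra star.
Variables s r : R.

Definition kills_Tgen (u : R) (x y : M) : Prop :=
  forall (A : zmodType) (beta : M -> M -> A), balanced star beta ->
    beta ((u * s) *: x) y = beta ((u * r) *: y) x.

Lemma tensor_zero_cat (t1 t2 : seq (R * M * M)) :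
  tensor_zero star t1 -> tensor_zero star t2 -> tensor_zero star (t1 ++ t2).
Proof. by move=> h1 h2 A beta hb; rewrite big_cat /= h1 // h2 // addr0. Qed.

Lemma tensor_zero_rscale k (t : seq (R * M * M)) :
  tensor_zero star t -> tensor_zero star (rscale k t).
Proof.
move=> ht A beta hb; rewrite big_map /=.
under eq_bigr do rewrite -scalerA.
exact: ht _ _ (balancedZl hstar hb k).
Qed.

Lemma rscale_cat u (t1 t2 : seq (R * M * M)) :
  rscale u (t1 ++ t2) = rscale u t1 ++ rscale u t2.
Proof. exact: map_cat. Qed.

Lemma rscaleM u v (t : seq (R * M * M)) : rscale u (rscale v t) = rscale (u * v) t.
Proof. by rewrite /rscale -map_comp; apply: eq_map => p /=; rewrite mulrA. Qed.

Lemma tensor_zero_Tgen u c x y :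
  kills_Tgen u x y -> tensor_zero star (rscale u (T_elem s r [:: (c, x, y)])).
Proof.
move=> hu A beta hb; rewrite !big_cons big_nil addr0 /= mulrN scaleNr.
rewrite (balancedNl hb) [u * (c * s)]mulrCA [u * (c * r)]mulrCA.
by have := hu _ _ (balancedZl hstar hb c); rewrite /= !scalerA => ->; rewrite subrr.
Qed.

Lemma tensor_zero_T_elem :
  (forall x y : M, exists u, nzd u /\ kills_Tgen u x y) ->
  forall l, exists u, nzd u /\ tensor_zero star (rscale u (T_elem s r l)).
Proof.
move=> hgen; elim=> [|[[c x] y] l [u [hu IH]]].
  by exists 1; split; [exact: nzd1 | move=> A beta _; rewrite big_nil].
have [v [hv hvxy]] := hgen x y.
exists (u * v); split; first exact: nzdM.
rewrite (_ : T_elem s r _ = T_elem s r [:: (c, x, y)] ++ T_elem s r l) //.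
rewrite rscale_cat; apply: tensor_zero_cat.
- by rewrite -rscaleM; apply: tensor_zero_rscale; exact: tensor_zero_Tgen.
- by rewrite mulrC -rscaleM; apply: tensor_zero_rscale.
Qed.

Lemma kills_Tgen_torsion u v x y :
  u *: x = 0 -> v *: y = 0 -> kills_Tgen (u * v) x y.
Proof.
move=> hux hvy A beta hb.
have -> : (u * v * s) *: x = (v * s) *: (u *: x) by rewrite scalerA; congr (_ *: _); ring.
have -> : (u * v * r) *: y = (u * r) *: (v *: y) by rewrite scalerA; congr (_ *: _); ring.
by rewrite hux hvy !scaler0 !(balanced0l hb).
Qed.

Definition rank_one (lam : M -> R) (p : M) : M -> M := fun z => lam z *: p.

Variable lam : M -> R.
Hypothesis lam_lin : forall c z z', lam (c *: z + z') = c * lam z + lam z'.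

Lemma rank_one_Rlin p : Rlin (rank_one lam p).
Proof. by move=> c z z'; rewrite /rank_one lam_lin scalerDl scalerA. Qed.

Lemma kills_Tgen_rank_one x y x0 v :
  (v * s) *: star (rank_one lam y) (rank_one lam x x0) =
  (v * r) *: star (rank_one lam x) (rank_one lam y x0) ->
  kills_Tgen (lam x0 * lam x0 * v) x y.
Proof.
move=> hv A beta hb; have [star_lin _] := hstar; have [_ _ hE] := hb.
have := congr1 (beta ^~ x0) hv.
rewrite -!(RlinZ (star_lin _ (rank_one_Rlin _))) (hE _ (rank_one_Rlin y)).
rewrite (hE _ (rank_one_Rlin x)) /rank_one !(balancedZ hstar hb) !scalerA.
have reassoc w : lam x0 * (v * w) * lam x0 = lam x0 * lam x0 * v * w by ring.
by rewrite !reassoc.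
Qed.

End TensorRelations.

Lemma mulmx_rank_one_tr (Q : comPzRingType) n (X C : 'M[Q]_n) (a : Q)
    (p q : 'cV[Q]_n) (l : 'rV[Q]_n) :
  C^T = a *: C ->
  X *m (q *m l)^T *m C *m (p *m l) = a *: (X *m (p *m l)^T *m C *m (q *m l)).
Proof.
move=> hCT.
have tr1 (K : 'M[Q]_1) : K^T = K.
  by apply/matrixP => i j; rewrite (ord1 i) (ord1 j) mxE.
have hqp : q^T *m C *m p = a *: (p^T *m C *m q).
  by rewrite -[LHS]tr1 !trmx_mul trmxK hCT -scalemxAl -scalemxAr mulmxA.
have regroup (u w : 'cV[Q]_n) :
    X *m (u *m l)^T *m C *m (w *m l) = X *m l^T *m (u^T *m C *m w) *m l.
  by rewrite trmx_mul !mulmxA.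
by rewrite !regroup hqp -scalemxAr -scalemxAl.
Qed.

Section ClearDenominators.
Variables (R : comPzRingType) (M : lmodType R) (Q : comUnitRingType).
Variable iota : {rmorphism R -> Q}.
Hypothesis hiota : total_quotient iota.

Lemma total_quotient_inj : injective iota.
Proof.
have [_ _ ker0] := hiota; move=> x y hxy; apply/eqP; rewrite -subr_eq0.
by apply/eqP/ker0; rewrite rmorphB hxy subrr.
Qed.

Variable phi : M -> Q.
Hypothesis phi_lin : forall c z z', phi (c *: z + z') = iota c * phi z + phi z'.

Lemma common_denominator_span (gs : seq M) :
  exists d, nzd d /\ forall cs : seq R, size cs = size gs ->
    exists t, iota t = iota d * phi (\sum_(i < size gs) cs`_i *: gs`_i).
Proof.
have [unit_nzd frac _] := hiota.
elim: gs => [|g gs [d [hd IH]]].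
  exists 1; split=> [|cs _]; first exact: nzd1.
  exists 0; rewrite big_ord0 rmorph0.
  have := phi_lin 1 0 0; rewrite rmorph1 mul1r !scale1r addr0.
  by move=> /(congr1 (fun t => t - phi 0)); rewrite subrr addrK => <-.
have [a0 [u0 [hu0 hg]]] := frac (phi g).
exists (d * u0); split=> [|[|c cs] //= [hsz]]; first exact: nzdM.
have [t ht] := IH cs hsz.
exists (d * c * a0 + u0 * t).
rewrite big_ord_recl /= phi_lin rmorphD !rmorphM ht hg.
have /divrr hu : iota u0 \is a GRing.unit by exact: unit_nzd.
by rewrite -[iota d * _ * _]mulr1 -hu; ring.
Qed.

Lemma clear_denominators : fin_gen M ->
  exists d (lam : M -> R), [/\ nzd d,
    forall z, iota (lam z) = iota d * phi z &
    forall c z z', lam (c *: z + z') = c * lam z + lam z'].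
Proof.
move=> [gs hgs]; have [d [hd hspan]] := common_denominator_span gs.
have hz z : exists t, iota t = iota d * phi z.
  by have [cs [hcs ->]] := hgs z; exact: hspan.
pose lam z := proj1_sig (constructive_indefinite_description _ (hz z)).
have hlam z : iota (lam z) = iota d * phi z :=
  proj2_sig (constructive_indefinite_description _ (hz z)).
exists d, lam; split=> // c z z'; apply: total_quotient_inj.
by rewrite rmorphD rmorphM !hlam phi_lin; ring.
Qed.

End ClearDenominators.

Section Coordinates.
Variables (R : comPzRingType) (M : lmodType R) (Q : comUnitRingType).
Variables (iota : {rmorphism R -> Q}) (N : lmodType Q) (jM : M -> N).
Variables (n : nat) (b : 'I_n -> N).
Hypotheses (hiota : total_quotient iota) (hjM : module_localization iota jM).
Hypothesis hb : is_basis b.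

Definition coord (v : N) : 'cV[Q]_n :=
  proj1_sig (constructive_indefinite_description _ (hb v)).

Lemma coordK v : v = \sum_i coord v i ord0 *: b i.
Proof. by rewrite /coord; case: constructive_indefinite_description => c []. Qed.

Lemma coord_unique v (c : 'cV[Q]_n) : v = \sum_i c i ord0 *: b i -> c = coord v.
Proof.
rewrite /coord; case: constructive_indefinite_description => c' [_ uniq_c'] /= hc.
by rewrite -(uniq_c' c hc).
Qed.

Lemma coord_jM c z z' :
  coord (jM (c *: z + z')) = iota c *: coord (jM z) + coord (jM z').
Proof.
have [jD jZ _ _] := hjM; apply/esym/coord_unique.
rewrite jD jZ [jM z]coordK [jM z']coordK scaler_sumr -big_split /=.
by apply: eq_bigr => i _; rewrite !mxE scalerDl scalerA -!coordK.
Qed.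

Lemma represents_comp (F G : M -> M) (A B : 'M[Q]_n) :
  represents jM b F A -> represents jM b G B -> represents jM b (F \o G) (A *m B).
Proof. by move=> hF hG z c /hG /hF; rewrite -mulmxA. Qed.

Lemma represents_rank_one (lam : M -> R) (l : 'rV[Q]_n) p :
  (forall z, l *m coord (jM z) = (iota (lam z))%:M) ->
  represents jM b (rank_one lam p) (coord (jM p) *m l).
Proof.
have [_ jZ _ _] := hjM; move=> hl z c /coord_unique ->.
rewrite jZ {1}[jM p]coordK scaler_sumr; apply: eq_bigr => i _.
by rewrite -mulmxA hl mul_mx_scalar mxE scalerA mulrC.
Qed.

Lemma represents_torsion (F G : M -> M) (A B : 'M[Q]_n) s r :
  represents jM b F A -> represents jM b G B -> iota s *: A = iota r *: B ->
  forall x, exists v, nzd v /\ (v * s) *: F x = (v * r) *: G x.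
Proof.
have [jD jZ _ jtor] := hjM; move=> hF hG hAB x.
have hx := coordK (jM x).
have scale_rep q (X : 'M[Q]_n) :
    q *: \sum_i (X *m coord (jM x)) i ord0 *: b i =
    \sum_i ((q *: X) *m coord (jM x)) i ord0 *: b i.
  by rewrite scaler_sumr; apply: eq_bigr => i _; rewrite scalerA -scalemxAl [in RHS]mxE.
have : jM (s *: F x + (- r) *: G x) = 0.
  by rewrite jD !jZ (hF _ _ hx) (hG _ _ hx) rmorphN scaleNr !scale_rep hAB subrr.
case/jtor=> v [hv]; rewrite scalerDr !scalerA mulrN scaleNr => /eqP.
by rewrite subr_eq0 => /eqP hvx; exists v.
Qed.

Lemma coord_basis_preimage i :
  exists x0 u, nzd u /\ coord (jM x0) = iota u *: delta_mx i 0.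
Proof.
have [_ _ jsurj _] := hjM; have [unit_nzd _ _] := hiota.
have [x0 [u [hu hbi]]] := jsurj (b i); exists x0, u; split=> //.
apply/esym/coord_unique; rewrite (bigD1 i) //= big1 => [|j /negbTE hji].
  by rewrite !mxE !eqxx mulr1 addr0 hbi scalerA divrr ?scale1r //; exact: unit_nzd.
by rewrite !mxE hji mulr0 scale0r.
Qed.

Lemma kills_Tgen_localization (i0 : 'I_n) (star : (M -> M) -> (M -> M))
    (C : 'M[Q]_n) (a : Q) (r s : R) :
  fin_gen M -> Rstar_algebra star -> C^T = a *: C ->
  (forall f, Rlin f -> forall A : 'M[Q]_n, represents jM b f A ->
     represents jM b (star f) (invmx C *m A^T *m C)) ->
  iota r = a * iota s ->
  forall x y : M, exists v, nzd v /\ kills_Tgen star s r v x y.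
Proof.
move=> hfg hstar hCT hrep hra x y.
pose phi z := coord (jM z) i0 ord0.
have phi_lin c z z' : phi (c *: z + z') = iota c * phi z + phi z'.
  by rewrite /phi coord_jM !mxE.
have [d [lam [hd hlam lam_lin]]] := clear_denominators hiota phi_lin hfg.
pose l : 'rV[Q]_n := iota d *: delta_mx 0 i0.
have hl z : l *m coord (jM z) = (iota (lam z))%:M.
  apply/matrixP => i j; rewrite (ord1 i) (ord1 j) hlam -scalemxAl -rowE !mxE.
  by rewrite mulr1n.
have [x0 [u [hu hx0]]] := coord_basis_preimage i0.
have lam_x0 : lam x0 = d * u.
  by apply: (total_quotient_inj hiota); rewrite hlam /phi hx0 !mxE !eqxx mulr1 rmorphM.
pose th p := coord (jM p) *m l.
have rep p : represents jM b (rank_one lam p) (th p) := represents_rank_one p hl.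
have rep_star p := hrep _ (rank_one_Rlin lam_lin p) _ (rep p).
have hsr : iota s *: (invmx C *m (th y)^T *m C *m th x) =
           iota r *: (invmx C *m (th x)^T *m C *m th y).
  by rewrite (mulmx_rank_one_tr _ _ _ _ hCT) scalerA mulrC -hra.
have [v [hv hvx0]] := represents_torsion (represents_comp (rep_star y) (rep x))
  (represents_comp (rep_star x) (rep y)) hsr x0.
exists (lam x0 * lam x0 * v); split; last exact: kills_Tgen_rank_one hvx0.
by rewrite lam_x0; do !apply: nzdM.
Qed.

End Coordinates.

Lemma torsion_of_basis0 (R : comPzRingType) (M : lmodType R) (Q : comUnitRingType)
    (iota : {rmorphism R -> Q}) (N : lmodType Q) (jM : M -> N) (b : 'I_0 -> N) :
  module_localization iota jM -> is_basis b ->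
  forall x : M, exists u, nzd u /\ u *: x = 0.
Proof.
move=> [_ _ _ jtor] hb x; apply: jtor.
by have [c [-> _]] := hb (jM x); rewrite big_ord0.
Qed.

Theorem lemma3p3 (R : comPzRingType) (M : lmodType R)
  (star : (M -> M) -> (M -> M))
  (Q : comUnitRingType) (iota : {rmorphism R -> Q})
  (N : lmodType Q) (jM : M -> N) (n : nat) (b : 'I_n -> N)
  (C : 'M[Q]_n) (a : Q) (r s : R) :
  noetherian R -> local_ring R -> fin_gen M ->
  Rstar_algebra star ->
  total_quotient iota ->
  module_localization iota jM ->
  is_basis b ->
  C \in unitmx -> C^T = a *: C -> a ^+ 2 = 1 ->
  (forall f, Rlin f -> forall A : 'M[Q]_n, represents jM b f A ->
     represents jM b (star f) (invmx C *m A^T *m C)) ->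
  nzd r -> nzd s -> iota r = a * iota s ->
  forall l : seq (R * M * M),
    exists u : R, nzd u /\ tensor_zero star (rscale u (T_elem s r l)).
Proof.
move=> _ _ hfg hstar hiota hjM hb _ hCT _ hrep _ _ hra.
apply: (tensor_zero_T_elem hstar).
case: n b C hb hCT hrep => [|n] b C hb hCT hrep x y.
- have [u [hu hux]] := torsion_of_basis0 hjM hb x.
  have [v [hv hvy]] := torsion_of_basis0 hjM hb y.
  by exists (u * v); split; [exact: nzdM | exact: kills_Tgen_torsion].
- exact: (kills_Tgen_localization hiota hjM hb ord0 hfg hstar hCT hrep hra).
Qed.
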